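(* For every integer $m\geq 4$, the cycle sun $CS_m$ and the wheel sun $WS_m$ satisfy $\eta(CS_m)=\eta(WS_m)=2$.
   Context: All graphs are finite, simple and undirected. Indices are taken modulo $m$, so $u_0=u_m$ and $v_0=v_m$. The cycle sun $CS_m$ has vertices $u_1,\dots,u_m,v_1,\dots,v_m$ and edges $(u_i,u_{i-1})$ and $(u_i,v_{i-1}),(u_i,v_i)$ for all $i\in[m]$ (so the $u_i$ form a cycle and each $v_i$ is adjacent exactly to $u_i$ and $u_{i+1}$). The wheel sun $WS_m$ is obtained from $CS_m$ by adding one further vertex $w$ adjacent to all of $u_1,\dots,u_m$. For a vertex $v$, $N(v)$ is its set of neighbours. For a positive integer $k$, $[k]=\{1,\dots,k\}$. For a labeling $f:V(G)\to[k]$ and $S\subseteq V(G)$, $f(S)=\sum_{u\in S}f(u)$. A labeling $f:V(G)\to[k]$ is an additive $k$-coloring if $f(N(u))\neq f(N(v))$ for every edge $(u,v)$ of $G$. The additive chromatic number $\eta(G)$ is the least $k$ for which $G$ has an additive $k$-coloring. *)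

From mathcomp Require Import all_boot.
Set Implicit Arguments. Unset Strict Implicit. Unset Printing Implicit Defensive.

Definition simple_graph (T : finType) (adj : rel T) : Prop :=
  (forall x y, adj x y = adj y x) /\ (forall x, ~~ adj x x).

Definition nbsum (T : finType) (adj : rel T) (f : T -> nat) (x : T) : nat :=
  \sum_(y | adj x y) f y.

Definition additive_coloring (T : finType) (adj : rel T) (k : nat) (f : T -> nat) : Prop :=
  (forall x, 1 <= f x <= k) /\
  (forall x y, adj x y -> nbsum adj f x != nbsum adj f y).

Definition has_additive_coloring (T : finType) (adj : rel T) (k : nat) : Prop :=
  exists f : T -> nat, additive_coloring adj k f.

Definition additive_chromatic_number_is (T : finType) (adj : rel T) (k : nat) : Prop :=
  0 < k /\ has_additive_coloring adj k /\
  (forall k', 0 < k' < k -> ~ has_additive_coloring adj k').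

(* Cycle sun CS_m: inl i = u_(i+1), inr i = v_(i+1), indices mod m (0-based).
   u_i ~ u_(i+1); v_i ~ u_i and v_i ~ u_(i+1). *)
Definition cs_adj (m : nat) : rel ('I_m + 'I_m) :=
  fun a b =>
    match a, b with
    | inl i, inl j => (val j == (val i).+1 %% m) || (val i == (val j).+1 %% m)
    | inl i, inr j => (val i == val j) || (val i == (val j).+1 %% m)
    | inr i, inl j => (val j == val i) || (val j == (val i).+1 %% m)
    | inr _, inr _ => false
    end.

(* Wheel sun WS_m: None = hub w, adjacent to all u_i. *)
Definition ws_adj (m : nat) : rel (option ('I_m + 'I_m)) :=
  fun a b =>
    match a, b with
    | Some x, Some y => cs_adj x y
    | None, Some (inl _) => true
    | Some (inl _), None => true
    | _, _ => false
    end.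

From mathcomp Require Import all_boot zify.
Set Implicit Arguments. Unset Strict Implicit. Unset Printing Implicit Defensive.

(* Label every u_i by A(i), every v_i by B(i) and the hub by W, all in {1, 2}.
   Then u_i sees A(i-1) + A(i+1) + B(i-1) + B(i) >= 4 and v_i sees
   A(i) + A(i+1) <= 4, so a labeling is additive once consecutive u-sums differ
   and each v-sum differs from its two u-neighbours; in the wheel the u-sums
   grow by W >= 1, which settles the spokes, and the hub sum is at least m.
   With A = 1 the rim condition reads B(i-1) <> B(i+1), met by the pattern
   1,1,2,2,... when 4 divides m; one 2 in A and a patched tail of B repair the
   wrap-around for every m >= 10, and explicit labelings cover 4 <= m <= 9.
   No 1-coloring exists: it makes neighbour sums equal to degrees, and
   consecutive u_i have the same degree. *)

Lemma big_optionType (I : finType) (P : pred (option I)) (F : option I -> nat) :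
  \sum_(i | P i) F i = (if P None then F None else 0) + \sum_(i | P (Some i)) F (Some i).
Proof.
rewrite ![index_enum _]unlock [@Finite.enum in LHS]unlock /= big_cons big_map.
by case: (P None).
Qed.

Lemma big_pred2 (I : finType) (a b : I) (F : I -> nat) : a != b ->
  \sum_(i | (i == a) || (i == b)) F i = F a + F b.
Proof.
move=> neq_ab; rewrite (bigD1 a) ?eqxx //= (big_pred1 b) // => i /=.
by case: (eqVneq i a) => [->|]; rewrite ?(negbTE neq_ab) ?andbT.
Qed.

Lemma sum_ord_sumn m (A : nat -> nat) : \sum_(i < m) A i = sumn (map A (iota 0 m)).
Proof. by rewrite sumnE big_map -(big_mkord xpredT) /index_iota subn0. Qed.

Lemma size_le_sumn_map (T : Type) (A : T -> nat) (s : seq T) :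
  (forall x, 0 < A x) -> size s <= sumn (map A s).
Proof. by move=> A_gt0; elim: s => //= x s; have := A_gt0 x; lia. Qed.

Section CyclicIndices.
Variable m : nat.

Definition succ_mod (k : nat) : nat := k.+1 %% m.
Definition pred_mod (k : nat) : nat := (k + m).-1 %% m.

Lemma succ_modE k : k < m -> succ_mod k = if k.+1 == m then 0 else k.+1.
Proof.
by move=> lt_km; rewrite /succ_mod; case: eqP => [->|?]; rewrite ?modnn // modn_small; lia.
Qed.

Lemma pred_modE k : k < m -> pred_mod k = if k == 0 then m.-1 else k.-1.
Proof.
move=> lt_km; rewrite /pred_mod; case: eqP => [->|?]; first by rewrite modn_small; lia.
have -> : (k + m).-1 = k.-1 + m by lia.
by rewrite modnDr modn_small; lia.
Qed.

Lemma succ_mod_cases k : k < m ->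
  (k.+1 = m /\ succ_mod k = 0) \/ (k.+1 < m /\ succ_mod k = k.+1).
Proof. by move=> lt_km; rewrite succ_modE //; case: eqP => ?; [left | right]; split=> //; lia. Qed.

Lemma pred_mod_cases k : k < m ->
  (k = 0 /\ pred_mod k = m.-1) \/ (0 < k /\ pred_mod k = k.-1).
Proof. by move=> lt_km; rewrite pred_modE //; case: eqP => ?; [left | right]; split=> //; lia. Qed.

Lemma succ_mod_lt k : 0 < m -> succ_mod k < m.
Proof. exact: ltn_pmod. Qed.

Lemma pred_mod_succ k : k < m -> pred_mod (succ_mod k) = k.
Proof. by move=> lt_km; exact: (congr1 val (ordSK (Ordinal lt_km))). Qed.

Lemma eq_ordS_ord_pred (i j : 'I_m) : (i == ordS j) = (j == ord_pred i).
Proof. by apply/eqP/eqP => [->|->]; rewrite ?ordSK ?ord_predK. Qed.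

Lemma ordS_neq (i : 'I_m) : 1 < m -> ordS i != i.
Proof.
move=> m_gt1; apply/eqP => /(congr1 val) /=.
by rewrite -/(succ_mod i) succ_modE //; case: eqP; lia.
Qed.

Lemma ord_pred_neq (i : 'I_m) : 1 < m -> i != ord_pred i.
Proof. by move=> m_gt1; rewrite -eq_ordS_ord_pred eq_sym ordS_neq. Qed.

Lemma ordS_neq_ord_pred (i : 'I_m) : 2 < m -> ordS i != ord_pred i.
Proof.
move=> m_gt2; apply/eqP => /(congr1 val) /=.
rewrite -/(succ_mod i) -/(pred_mod i) succ_modE // pred_modE //.
by have := ltn_ord i; case: eqP; case: eqP; lia.
Qed.

End CyclicIndices.

Section NeighbourSums.
Variable m : nat.
Hypothesis m_gt2 : 2 < m.

Lemma nbsum_cs_u (f : 'I_m + 'I_m -> nat) (i : 'I_m) :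
  nbsum (@cs_adj m) f (inl i) =
  f (inl (ord_pred i)) + f (inl (ordS i)) + (f (inr (ord_pred i)) + f (inr i)).
Proof.
have m_gt1 : 1 < m by lia.
rewrite /nbsum big_sumType /=.
rewrite [X in X + _](eq_bigl (fun j => (j == ordS i) || (j == ord_pred i))) => [|j]; last first.
  by rewrite -eq_ordS_ord_pred.
rewrite [X in _ + X](eq_bigl (fun j => (j == ord_pred i) || (j == i))) => [|j]; last first.
  by rewrite -eq_ordS_ord_pred orbC [j == i]eq_sym.
rewrite !big_pred2 ?ordS_neq_ord_pred // 1?eq_sym ?ord_pred_neq //; lia.
Qed.

Lemma nbsum_cs_v (f : 'I_m + 'I_m -> nat) (i : 'I_m) :
  nbsum (@cs_adj m) f (inr i) = f (inl i) + f (inl (ordS i)).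
Proof.
rewrite /nbsum big_sumType /= big_pred0_eq addn0.
rewrite (eq_bigl (fun j => (j == i) || (j == ordS i))) // big_pred2 // eq_sym ordS_neq //; lia.
Qed.

Lemma nbsum_ws_some (f : option ('I_m + 'I_m) -> nat) (x : 'I_m + 'I_m) :
  nbsum (@ws_adj m) f (Some x) =
  (if x is inl _ then f None else 0) + nbsum (@cs_adj m) (f \o Some) x.
Proof. by rewrite /nbsum big_optionType; case: x. Qed.

Lemma nbsum_ws_hub (f : option ('I_m + 'I_m) -> nat) :
  nbsum (@ws_adj m) f None = \sum_(i < m) f (Some (inl i)).
Proof. by rewrite /nbsum big_optionType /= add0n big_sumType /= big_pred0_eq addn0. Qed.

End NeighbourSums.

Variant sun_edge m : 'I_m + 'I_m -> 'I_m + 'I_m -> Prop :=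
  | RimEdge (i : 'I_m) : sun_edge (inl i) (inl (ordS i))
  | SpokeEdge (i : 'I_m) : sun_edge (inr i) (inl i)
  | SpokeEdgeS (i : 'I_m) : sun_edge (inr i) (inl (ordS i)).

Lemma cs_adj_sun_edge m (x y : 'I_m + 'I_m) :
  cs_adj x y -> sun_edge x y \/ sun_edge y x.
Proof.
case: x y => [i|i] [j|j] //=.
- change ((j == ordS i) || (i == ordS j) -> sun_edge (inl i) (inl j) \/ sun_edge (inl j) (inl i)).
  by case/orP => /eqP ->; [left | right]; constructor.
- change ((i == j) || (i == ordS j) -> sun_edge (inl i) (inr j) \/ sun_edge (inr j) (inl i)).
  by case/orP => /eqP ->; right; constructor.
- change ((j == i) || (j == ordS i) -> sun_edge (inr i) (inl j) \/ sun_edge (inl j) (inr i)).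
  by case/orP => /eqP ->; left; constructor.
Qed.

Lemma no_additive_1coloring (T : finType) (adj : rel T) (x y : T) :
  adj x y -> nbsum adj (fun=> 1) x = nbsum adj (fun=> 1) y ->
  ~ has_additive_coloring adj 1.
Proof.
move=> adj_xy; rewrite /nbsum => eq_deg [f [f_range f_col]].
have f_1 z : f z = 1 by have := f_range z; lia.
by move: (f_col x y adj_xy); rewrite /nbsum !(eq_bigr _ (fun z _ => f_1 z)) eq_deg eqxx.
Qed.

Section Labelings.
Variables (m : nat) (A B : nat -> nat) (W : nat).

Definition sun_labeling (x : 'I_m + 'I_m) : nat :=
  match x with inl i => A i | inr i => B i end.

Definition wheel_labeling (x : option ('I_m + 'I_m)) : nat :=
  if x is Some y then sun_labeling y else W.

(* Labels are functions of the index, so that the conditions below are boolean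
   checks over [iota 0 m] that evaluate by computation for concrete m. *)
Definition u_sum (k : nat) : nat :=
  A (pred_mod m k) + A (succ_mod m k) + (B (pred_mod m k) + B k).

Definition v_sum (k : nat) : nat := A k + A (succ_mod m k).

Definition good_sun_labels : bool :=
  all (fun k => [&& 1 <= A k <= 2, 1 <= B k <= 2,
                    u_sum (succ_mod m k) != u_sum k,
                    v_sum k != u_sum k & v_sum k != u_sum (succ_mod m k)])
      (iota 0 m).

(* Spoke edges of the wheel need no condition: see [v_sum_le_u_sum]. *)
Definition good_hub_label : bool :=
  (1 <= W <= 2) && all (fun k => sumn (map A (iota 0 m)) != W + u_sum k) (iota 0 m).

Hypothesis m_gt2 : 2 < m.
Hypothesis sun_ok : good_sun_labels.

Lemma good_sun_labelsP (i : 'I_m) :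
  [/\ 1 <= A i <= 2, 1 <= B i <= 2, u_sum (ordS i) != u_sum i,
      v_sum i != u_sum i & v_sum i != u_sum (ordS i)].
Proof.
have i_in : val i \in iota 0 m by rewrite mem_iota add0n ltn_ord.
by have /and5P[] := allP sun_ok _ i_in.
Qed.

Lemma nbsum_sun_u (i : 'I_m) : nbsum (@cs_adj m) sun_labeling (inl i) = u_sum i.
Proof. by rewrite nbsum_cs_u. Qed.

Lemma nbsum_sun_v (i : 'I_m) : nbsum (@cs_adj m) sun_labeling (inr i) = v_sum i.
Proof. by rewrite nbsum_cs_v. Qed.

Lemma labels_range (i : 'I_m) : 1 <= A i <= 2 /\ 1 <= B i <= 2.
Proof. by case: (good_sun_labelsP i). Qed.

Lemma v_sum_le_u_sum (i j : 'I_m) : v_sum i <= u_sum j.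
Proof.
move: (labels_range i) (labels_range (ordS i)) (labels_range j).
move: (labels_range (ordS j)) (labels_range (ord_pred j)).
rewrite /v_sum /u_sum /succ_mod /pred_mod /=; lia.
Qed.

Lemma sun_labeling_coloring : additive_coloring (@cs_adj m) 2 sun_labeling.
Proof.
split; first by case=> i /=; case: (good_sun_labelsP i).
move=> x y /cs_adj_sun_edge.
suff edge_ok x' y' : sun_edge x' y' ->
    nbsum (@cs_adj m) sun_labeling x' != nbsum (@cs_adj m) sun_labeling y'.
  by case=> /edge_ok //; rewrite eq_sym.
case=> i; rewrite ?nbsum_sun_u ?nbsum_sun_v; case: (good_sun_labelsP i) => //.
by move=> _ _; rewrite eq_sym.
Qed.

Hypothesis hub_ok : good_hub_label.

Lemma wheel_labeling_coloring : additive_coloring (@ws_adj m) 2 wheel_labeling.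
Proof.
have /andP[W_range /allP hub_sums] := hub_ok.
have hub_neq (i : 'I_m) : nbsum (@ws_adj m) wheel_labeling None != W + u_sum i.
  by rewrite nbsum_ws_hub sum_ord_sumn hub_sums // mem_iota add0n ltn_ord.
split; first by case=> [[i|i]|] //=; case: (good_sun_labelsP i).
case=> [x|] [y|] //=; last first.
- by case: y => // i _; rewrite nbsum_ws_some nbsum_sun_u; apply: hub_neq.
- by case: x => // i _; rewrite nbsum_ws_some nbsum_sun_u eq_sym; apply: hub_neq.
move=> adj_xy; have {adj_xy} /cs_adj_sun_edge : cs_adj x y by case: x adj_xy.
suff edge_ok x' y' : sun_edge x' y' ->
    nbsum (@ws_adj m) wheel_labeling (Some x') != nbsum (@ws_adj m) wheel_labeling (Some y').
  by case=> /edge_ok //; rewrite eq_sym.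
case/andP: W_range => W_ge1 _.
case=> i; rewrite !nbsum_ws_some /= ?nbsum_sun_u ?nbsum_sun_v.
- by rewrite eqn_add2l eq_sym; case: (good_sun_labelsP i).
- by have := v_sum_le_u_sum i i; lia.
- by have := v_sum_le_u_sum i (ordS i); lia.
Qed.

End Labelings.

Lemma additive_chromatic_sun_wheel_2 m (A B : nat -> nat) (W : nat) :
  2 < m -> good_sun_labels m A B -> good_hub_label m A B W ->
  additive_chromatic_number_is (@cs_adj m) 2 /\ additive_chromatic_number_is (@ws_adj m) 2.
Proof.
move=> m_gt2 sun_ok hub_ok.
pose i : 'I_m := Ordinal (ltnW (ltnW m_gt2)).
have rim_edge : cs_adj (inl i) (inl (ordS i)) by rewrite /= eqxx.
have lt_k_2 k : 0 < k < 2 -> k = 1 by lia.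
split; (split; [done | split]).
- by exists (sun_labeling A B); exact: sun_labeling_coloring.
- move=> k /lt_k_2 ->; apply: (no_additive_1coloring rim_edge).
  by rewrite !nbsum_cs_u.
- by exists (wheel_labeling A B W); exact: wheel_labeling_coloring.
- have wheel_rim_edge : ws_adj (Some (inl i)) (Some (inl (ordS i))) by [].
  move=> k /lt_k_2 ->; apply: (no_additive_1coloring wheel_rim_edge).
  by rewrite !nbsum_ws_some !nbsum_cs_u.
Qed.

Definition small_labels (m : nat) : seq nat * seq nat * nat :=
  match m with
  | 4 => ([:: 1; 1; 1; 1], [:: 1; 1; 2; 2], 1)
  | 5 => ([:: 1; 1; 2; 1; 2], [:: 2; 1; 1; 2; 2], 2)
  | 6 => ([:: 1; 1; 1; 2; 1; 2], [:: 1; 1; 1; 1; 1; 1], 1)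
  | 7 => ([:: 1; 1; 1; 1; 2; 1; 2], [:: 1; 1; 2; 1; 1; 1; 1], 1)
  | 8 => ([:: 1; 1; 1; 1; 1; 1; 1; 1], [:: 1; 1; 2; 2; 1; 1; 2; 2], 1)
  | _ => ([:: 1; 1; 1; 1; 1; 1; 1; 2; 1], [:: 1; 1; 2; 2; 1; 1; 2; 1; 2], 1)
  end.

Lemma small_labels_good m : 4 <= m < 10 ->
  let: (A, B, W) := small_labels m in
  good_sun_labels m (nth 1 A) (nth 1 B) && good_hub_label m (nth 1 A) (nth 1 B) W.
Proof. by case/andP; do 10?[case: m => [|m] //]. Qed.

Definition large_A m k : nat := if k == m - 2 then 2 else 1.

Definition large_B m k : nat :=
  if k == m - 3 then 2 else if k == m - 2 then 1 else if k == m - 1 then 2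
  else if k %% 4 < 2 then 1 else 2.

Lemma large_A_range m k : 1 <= large_A m k <= 2.
Proof. by rewrite /large_A; case: ifP. Qed.

Lemma large_B_range m k : 1 <= large_B m k <= 2.
Proof. by rewrite /large_B; do !case: ifP. Qed.

Lemma large_labels_good m : 10 <= m ->
  good_sun_labels m (large_A m) (large_B m) && good_hub_label m (large_A m) (large_B m) 1.
Proof.
move=> m_ge10; have m_gt0 : 0 < m by lia.
apply/andP; split; apply/allP => k; rewrite mem_iota add0n => /andP[_ lt_km]; last first.
  have A_gt0 j : 0 < large_A m j by case/andP: (large_A_range m j).
  have := @size_le_sumn_map nat _ (iota 0 m) A_gt0; rewrite size_iota.
  move: (large_A_range m (pred_mod m k)) (large_A_range m (succ_mod m k)).
  by move: (large_B_range m (pred_mod m k)) (large_B_range m k); rewrite /u_sum; lia.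
rewrite /u_sum /v_sum pred_mod_succ //.
move: (succ_mod_cases lt_km) (succ_mod_cases (succ_mod_lt k m_gt0)) (pred_mod_cases lt_km).
move: (succ_mod m (succ_mod m k)) (succ_mod m k) (pred_mod m k) => k2 k1 k0.
case=> [[? ->]|[? ->]] [[? ->]|[? ->]] [[? ->]|[? ->]]; rewrite /large_A /large_B;
  by repeat (case: ifP => ?; try (exfalso; lia)); lia.
Qed.

Theorem mainTheorem13 (m : nat) : 4 <= m ->
  additive_chromatic_number_is (@cs_adj m) 2 /\
  additive_chromatic_number_is (@ws_adj m) 2.
Proof.
move=> m_ge4; have m_gt2 : 2 < m by lia.
have [m_lt10 | m_ge10] := ltnP m 10.
- have m_small : 4 <= m < 10 by rewrite m_ge4.
  move: (small_labels_good m_small); case: (small_labels m) => [[A B] W].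
  by case/andP; apply: additive_chromatic_sun_wheel_2.
- have /andP[sun_ok hub_ok] := large_labels_good m_ge10.
  exact: additive_chromatic_sun_wheel_2 sun_ok hub_ok.
Qed.
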